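(* The RMMS is self-maximizing: for every finite item set $M$, every $n\ge1$, and every two normalized monotone valuations $v,v'$ on $M$, there exists a bundle $T\subseteq M$ such that $v'(T)\ge \mathrm{RMMS}(M,v',n)$ and $v(T)\le \mathrm{RMMS}(M,v,n)$.
   Context: A valuation is a function $v:2^M\to\mathbb{R}$ that is normalized ($v(\emptyset)=0$) and monotone ($v(S)\le v(T)$ whenever $S\subseteq T$). Residual maximin share: $\mathrm{RMMS}(M,v,n)$ is the largest real $t$ with the following property: for every $0\le k<n$ and every $k$ pairwise disjoint bundles $B_1,\dots,B_k\subseteq M$ with $v(B_j)<t$ for all $j$, the set $M\setminus(B_1\cup\dots\cup B_k)$ can be partitioned into $n-k$ bundles each of value (under $v$) at least $t$. *)

From HB Require Import structures.
From mathcomp Require Import all_boot all_order all_algebra.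
From mathcomp Require Import reals.
From mathcomp Require classical_sets.
Set Implicit Arguments. Unset Strict Implicit. Unset Printing Implicit Defensive.
Import Order.TTheory GRing.Theory Num.Theory.
Local Open Scope ring_scope.

Definition valuation (R : realType) (M : finType) (v : {set M} -> R) : Prop :=
  v set0 = 0 /\ (forall S T : {set M}, S \subset T -> v S <= v T).

Definition pw_disjoint (M : finType) (k : nat) (B : 'I_k -> {set M}) : Prop :=
  forall i j : 'I_k, i != j -> [disjoint B i & B j].

(* The RMMS property of threshold t. Bundles of a partition may be empty. *)
Definition rmms_prop (R : realType) (M : finType) (v : {set M} -> R) (n : nat)
    (t : R) : Prop :=
  forall (k : nat), (k < n)%N ->
  forall B : 'I_k -> {set M}, pw_disjoint B -> (forall j, v (B j) < t) ->
  exists P : 'I_(n - k) -> {set M},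
    [/\ pw_disjoint P,
        \bigcup_(i < n - k) P i = ~: (\bigcup_(j < k) B j)
      & forall i, t <= v (P i)].

(* RMMS(M,v,n) = the largest t with the RMMS property (as a supremum; the
   supremum is attained, so it is the maximum). *)
Definition RMMS (R : realType) (M : finType) (v : {set M} -> R) (n : nat) : R :=
  sup (fun t : R => rmms_prop v n t).

From HB Require Import structures.
From mathcomp Require Import all_boot all_order all_algebra.
From mathcomp Require Import reals.
From mathcomp Require classical_sets.
Set Implicit Arguments. Unset Strict Implicit. Unset Printing Implicit Defensive.
Import Order.TTheory GRing.Theory Num.Theory.
Local Open Scope ring_scope.

(* Since M is finite, a valuation takes finitely many values; hence the
   supremum defining RMMS is attained, and any threshold strictly above
   RMMS(v) can be lowered to a value of v without changing which bundles
   count as small.  If every bundle T with v'(T) >= RMMS(v') had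
   v(T) > RMMS(v), let t be the least such v(T): bundles small for t under v
   are small for RMMS(v') under v', so every RMMS(v')-partition of the
   remaining items is a t-partition for v.  Thus t has the RMMS property for
   v, contradicting t > RMMS(v). *)

Lemma finite_gap_below (R : realType) (T : finType) (f : T -> R) (r : R) :
  exists2 m, m < r & forall x, f x < r -> f x <= m.
Proof.
exists (\big[Num.max/(r - 1)]_(x | f x < r) f x).
  elim/big_ind: _ => [|x y hx hy|//]; first by rewrite ltrBlDr ltrDl.
  by rewrite gt_max hx hy.
by move=> x fx_lt; rewrite (bigD1 x) //= le_max lexx.
Qed.

Lemma finite_gap_above (R : realType) (T : finType) (f : T -> R) (r : R) :
  exists2 m, r < m & forall x, r < f x -> m <= f x.
Proof.
have [m mr Hm] := finite_gap_below (fun x => - f x) (- r).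
exists (- m); first by rewrite ltrNr.
by move=> x rfx; rewrite lerNl Hm // ltrN2.
Qed.

Lemma rmms_prop_transfer (R : realType) (M : finType) (n : nat)
    (v v' : {set M} -> R) (t t' : R) :
  rmms_prop v' n t' -> (forall T, t' <= v' T -> t <= v T) -> rmms_prop v n t.
Proof.
move=> Ht' large_t'_t k kn B pB small_B.
have small'_B j : v' (B j) < t'.
  by rewrite ltNge; apply: contraTN (small_B j) => /large_t'_t; rewrite -leNgt.
have [P [pP cover_P large_P]] := Ht' k kn B pB small'_B.
by exists P; split => // i; apply: large_t'_t.
Qed.

Section RMMSAttained.
Variables (R : realType) (M : finType) (n : nat) (w : {set M} -> R).
Hypotheses (n_gt0 : (0 < n)%N) (hw : valuation w).

Lemma valuation_ge0 (T : {set M}) : 0 <= w T.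
Proof. by case: hw => w0 w_mono; rewrite -w0 w_mono ?sub0set. Qed.

Lemma valuation_le_setT (T : {set M}) : w T <= w setT.
Proof. by case: hw => _ w_mono; rewrite w_mono ?subsetT. Qed.

Lemma rmms_prop0 : rmms_prop w n 0.
Proof.
move=> [|k] kn B _ small_B; last by have := small_B ord0; rewrite ltNge valuation_ge0.
have i0 : (0 < n - 0)%N by rewrite subn0.
exists (fun i : 'I_(n - 0) => if i == Ordinal i0 then setT else set0); split.
- move=> i j ij; case: ifP => [/eqP hi|_]; case: ifP => [/eqP hj|_];
    rewrite -setI_eq0 ?setI0 ?set0I //.
  by move: ij; rewrite hi hj eqxx.
- apply/setP => x; rewrite big_ord0 setC0 in_setT.
  by apply/bigcupP; exists (Ordinal i0); rewrite ?eqxx ?in_setT.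
- by move=> i; apply: valuation_ge0.
Qed.

Lemma rmms_prop_le_setT t : rmms_prop w n t -> t <= w setT.
Proof.
move=> Ht; have i0 : (0 < n - 0)%N by rewrite subn0.
have disj0 : pw_disjoint (fun _ : 'I_0 => set0 : {set M}) by case.
have small0 (j : 'I_0) : w set0 < t by case: j.
have [P [_ _ large_P]] := Ht 0%N n_gt0 _ disj0 small0.
exact: le_trans (large_P (Ordinal i0)) (valuation_le_setT _).
Qed.

Lemma has_sup_rmms_prop : classical_sets.has_sup (fun t : R => rmms_prop w n t).
Proof.
split; first by exists 0; apply: rmms_prop0.
by exists (w setT) => t; apply: rmms_prop_le_setT.
Qed.

Lemma rmms_prop_le_RMMS t : rmms_prop w n t -> t <= RMMS w n.
Proof. exact: (sup_upper_bound has_sup_rmms_prop). Qed.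

Lemma rmms_prop_RMMS : rmms_prop w n (RMMS w n).
Proof.
have [m m_lt Hm] := finite_gap_below w (RMMS w n).
have gap_pos : 0 < RMMS w n - m by rewrite subr_gt0.
(* A threshold s in (m, RMMS] with the property declares small exactly the
   same bundles as RMMS does. *)
have [s Hs m_lt_s] := sup_adherent gap_pos has_sup_rmms_prop.
rewrite opprB addrC subrK in m_lt_s.
apply: (rmms_prop_transfer Hs) => T s_le.
rewrite leNgt; apply: contraTN s_le => /Hm /le_lt_trans /(_ m_lt_s).
by rewrite -ltNge.
Qed.

End RMMSAttained.

Theorem proposition3 (R : realType) (M : finType) (n : nat) (v v' : {set M} -> R) :
  (1 <= n)%N -> valuation v -> valuation v' ->
  exists T : {set M}, RMMS v' n <= v' T /\ v T <= RMMS v n.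
Proof.
move=> n_gt0 hv hv'.
case: (boolP [exists T, (RMMS v' n <= v' T) && (v T <= RMMS v n)]).
  by move=> /existsP [T /andP [large_v' small_v]]; exists T.
rewrite negb_exists => /forallP none; exfalso.
have large_v T : RMMS v' n <= v' T -> RMMS v n < v T.
  by move=> hT; have := none T; rewrite hT /= -ltNge.
have [t t_gt Ht] := finite_gap_above v (RMMS v n).
have : rmms_prop v n t.
  apply: (rmms_prop_transfer (rmms_prop_RMMS n_gt0 hv')) => T hT.
  exact/Ht/large_v.
by move=> /(rmms_prop_le_RMMS n_gt0 hv); rewrite leNgt t_gt.
Qed.
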